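(* Consider the blown-up Kolmogorov-flow system described in the context. Substitute the expansions $\bar u=\sum_{j\ge0}u^{(j)}r^j$, $\bar v=\sum_{j\ge0}v^{(j)}r^j$, $\bar p=r\sum_{j\ge0}p^{(j)}r^j$ (all functions of $(\bar x,y,\bar t)$, $2\pi$-periodic in $y\in(-\pi,\pi)$, with $\int_{-\pi}^\pi u^{(j)}dy=0$) into the equations and match powers of $r$, treating $r^{-1}\partial_{\bar t}r$ and $\bar{\mathcal R}(\bar t)$ as order one. Then at leading order $v^{(0)}=A(\bar x,\bar t)$ and $u^{(0)}=-\sqrt2\cos y\,A(\bar x,\bar t)$ for a real function $A$, i.e. $(u^{(0)},v^{(0)})=A\boldsymbol\varphi$ with $\boldsymbol\varphi=(-\sqrt2\cos y,1)^\top$, and a necessary condition for solvability (periodicity in $y$ of $p^{(3)}$) of the order-$r^3$ pressure equation is that $$\partial_{\bar t}A=-r(\bar t)^{-1}\partial_{\bar t}r(\bar t)\,A-3\partial_{\bar x}^4A-\sqrt2\,\bar{\mathcal R}(\bar t)\partial_{\bar x}^2A+\tfrac23\partial_{\bar x}^2(A^3).$$ Consequently, in charts (with $\beta=4$): $\mathcal K_1:\ \partial_{t_1}A_1=\tfrac{\varepsilon_1(t_1)}{2}A_1-3\partial_{x_1}^4A_1+\sqrt2\partial_{x_1}^2A_1+\tfrac23\partial_{x_1}^2(A_1^3)$; $\mathcal K_2:\ \partial_{t_2}A_2=-3\partial_{x_2}^4A_2-\sqrt2\mathcal R_2(t_2)\partial_{x_2}^2A_2+\tfrac23\partial_{x_2}^2(A_2^3)$;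 $\mathcal K_3:\ \partial_{t_3}A_3=-\tfrac{\varepsilon_3(t_3)}{2}A_3-3\partial_{x_3}^4A_3-\sqrt2\partial_{x_3}^2A_3+\tfrac23\partial_{x_3}^2(A_3^3)$, with $\varepsilon_1(t_1)=\frac{2\varepsilon_1(0)}{2-6\varepsilon_1(0)t_1}$, $\mathcal R_2(t_2)=\mathcal R_2(0)+t_2$, $\varepsilon_3(t_3)=\frac{2\varepsilon_3(0)}{2+6\varepsilon_3(0)t_3}$.
   Context: The underlying problem is the planar incompressible Navier–Stokes flow with Kolmogorov forcing and slowly increasing Reynolds number, on $(x,y)\in\mathbb R\times(-\pi,\pi)$ with periodic boundary conditions in $y$: for the perturbation $\mathbf U'=(u',v')$ of the basic flow $(\mathcal R\sin y,0)$ and pressure perturbation $p'$, $\partial_t\mathbf U'=-(\mathbf U'\cdot\nabla)\mathbf U'-\nabla p'+\Delta\mathbf U'-(\mathcal R'+\sqrt2)W\mathbf U'+\varepsilon(-\sin y,0)^\top$, $\dot{\mathcal R}'=\varepsilon$, where $W=\begin{pmatrix}\sin y\,\partial_x&\cos y\\0&\sin y\,\partial_x\end{pmatrix}$, $\mathcal R'=\mathcal R-\sqrt2$, with $\nabla\cdot\mathbf U'=0$ and zero mean flow $\int_{-\pi}^\pi u'\,dy=0$. The blow-up (with $\beta=4$) is $(\mathbf U',p')=r(\bar t)(\bar u,\bar v,\bar p)(\bar x,y,\bar t)$, $\mathcal R'=r^2\bar{\mathcal R}$, $\varepsilon=r^6\bar\varepsilon$, $(\bar{\mathcal R},\bar\varepsilon)\in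 S^1$, $\partial_x=r\partial_{\bar x}$, $\partial_t=r^4\partial_{\bar t}$ ($y$ is not rescaled). The resulting blown-up equations are $\partial_y\bar v=-r\partial_{\bar x}\bar u$, $\partial_y^2\bar u=\sqrt2\cos y\,\bar v+(\sqrt2\sin y\,\partial_{\bar x}\bar u+\bar v\partial_y\bar u)r+(\bar u\partial_{\bar x}\bar u-\partial_{\bar x}^2\bar u+\partial_{\bar x}\bar p+\bar{\mathcal R}\bar v\cos y)r^2+\bar{\mathcal R}\sin y\,\partial_{\bar x}\bar u\,r^3+(\partial_{\bar t}\bar u+r^{-1}\bar u\partial_{\bar t}r)r^4+\bar\varepsilon\sin y\,r^5$, $\partial_y\bar p=-\partial^2_{\bar xy}\bar u-\sqrt2\sin y\,\partial_{\bar x}\bar v-\bar v\partial_y\bar v+(-\bar u\partial_{\bar x}\bar v+\partial_{\bar x}^2\bar v)r-\bar{\mathcal R}\sin y\,\partial_{\bar x}\bar v\,r^2-(\partial_{\bar t}\bar v+\bar vr^{-1}\partial_{\bar t}r)r^3$, together with $\int_{-\pi}^\pi\bar u\,dy=0$. Charts: $\mathcal K_1$: $\bar{\mathcal R}=-1$, $\varepsilon=r_1^6\varepsilon_1$, $\dot r_1=-\tfrac12r_1\varepsilon_1$, $\dot\varepsilon_1=3\varepsilon_1^2$; $\mathcal K_2$: $\bar\varepsilon=1$, $\mathcal R'=r_2^2\mathcal R_2$, $\dot r_2=0$, $\dot{\mathcal R}_2=1$; $\mathcal K_3$: $\bar{\mathcal R}=1$, $\varepsilon=r_3^6\varepsilon_3$,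 $\dot r_3=\tfrac12r_3\varepsilon_3$, $\dot\varepsilon_3=-3\varepsilon_3^2$; $t_l,x_l,A_l$ denote desingularized time, space and amplitude in chart $\mathcal K_l$. *)

From Stdlib Require Import Reals Lra Lia.
From Coquelicot Require Import Coquelicot.
Open Scope R_scope.

(* A scalar field f(xbar, y, tbar). *)
Definition F3 := R -> R -> R -> R.

Definition px (f : F3) : F3 := fun x y t => Derive (fun z => f z y t) x.
Definition py (f : F3) : F3 := fun x y t => Derive (fun z => f x z t) y.
Definition pt (f : F3) : F3 := fun x y t => Derive (fun z => f x y z) t.

Definition pdir (d : nat) (f : F3) : F3 :=
  match d with O => px f | S O => py f | _ => pt f end.
Fixpoint pd (l : list nat) (f : F3) : F3 :=
  match l with nil => f | cons d l' => pdir d (pd l' f) end.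

Definition smooth_on (a b : R) (f : F3) : Prop :=
  forall (l : list nat) (x y t : R), a < t < b ->
    ex_derive (fun z => pd l f z y t) x /\
    ex_derive (fun z => pd l f x z t) y /\
    ex_derive (fun z => pd l f x y z) t /\
    continuous (fun q : R * R * R => pd l f (fst (fst q)) (snd (fst q)) (snd q))
               ((x, y), t).

(* Coefficient of r^j of (r^k * sum_i g_i r^i): g_(j-k), or 0 if j < k. *)
Definition lower (k j : nat) (g : nat -> R) : R :=
  if (k <=? j)%nat then g (j - k)%nat else 0.

Definition cv (F G : nat -> R) (n : nat) : R :=
  sum_f_R0 (fun i => F i * G (n - i)%nat) n.

(* The equations obtained by matching the coefficient of r^j in the blown-up
   system, for ubar = sum u_j r^j, vbar = sum v_j r^j and pressure
   r * sum p_j r^j, with rho = r^{-1} d_tbar r and Rb, eb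
   treated as order one. *)
Definition order_eqs (rho Rb eb : R -> R) (u v p : nat -> F3)
    (j : nat) (x y t : R) : Prop :=
  let U  := fun i => u i x y t in
  let V  := fun i => v i x y t in
  let Ux := fun i => px (u i) x y t in
  let Uy := fun i => py (u i) x y t in
  let Vx := fun i => px (v i) x y t in
  let Vy := fun i => py (v i) x y t in
  (* continuity equation *)
  py (v j) x y t = - lower 1 j Ux /\
  (* x-momentum *)
  py (py (u j)) x y t =
      sqrt 2 * cos y * V j
    + lower 1 j (fun i => sqrt 2 * sin y * Ux i)
    + lower 1 j (cv V Uy)
    + lower 2 j (cv U Ux)
    - lower 2 j (fun i => px (px (u i)) x y t)
    + lower 2 j (fun i => px (p i) x y t)
    + Rb t * cos y * lower 2 j V
    + Rb t * sin y * lower 3 j Ux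
    + lower 4 j (fun i => pt (u i) x y t + rho t * U i)
    + (if (j =? 5)%nat then eb t * sin y else 0) /\
  (* y-momentum (pressure equation) *)
  py (p j) x y t =
    - px (py (u j)) x y t
    - sqrt 2 * sin y * Vx j
    - cv V Vy j
    + lower 1 j (fun i => - cv U Vx i + px (px (v i)) x y t)
    - Rb t * sin y * lower 2 j Vx
    - lower 3 j (fun i => pt (v i) x y t + rho t * V i).

Definition hierarchy (a b : R) (rho Rb eb : R -> R) (u v p : nat -> F3) : Prop :=
  (forall j, smooth_on a b (u j) /\ smooth_on a b (v j) /\ smooth_on a b (p j)) /\
  (forall j x y t, a < t < b ->
      u j x (y + 2 * PI) t = u j x y t /\
      v j x (y + 2 * PI) t = v j x y t /\
      p j x (y + 2 * PI) t = p j x y t) /\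
  (forall j x t, a < t < b -> RInt (fun y => u j x y t) (- PI) PI = 0) /\
  (forall j x y t, a < t < b -> order_eqs rho Rb eb u v p j x y t).

Definition dx (A : R -> R -> R) : R -> R -> R := fun x t => Derive (fun z => A z t) x.
Definition dt (A : R -> R -> R) : R -> R -> R := fun x t => Derive (fun s => A x s) t.

Definition amplitude_law (a b : R) (c0 c2 : R -> R) (u v : nat -> F3) : Prop :=
  exists A : R -> R -> R,
    (forall x y t, a < t < b ->
        v 0%nat x y t = A x t /\ u 0%nat x y t = - sqrt 2 * cos y * A x t) /\
    (forall x t, a < t < b ->
        dt A x t = c0 t * A x t
                   - 3 * dx (dx (dx (dx A))) x t
                   + c2 t * dx (dx A) x t
                   + 2 / 3 * dx (dx (fun z s => A z s ^ 3)) x t).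

From Stdlib Require Import Reals Lra.
From Coquelicot Require Import Coquelicot.
Open Scope R_scope.

(* At each order j the equations
   [order_eqs] are ODEs in y whose right-hand sides, once the lower orders are
   known, are trigonometric polynomials in y.  A 2pi-periodic primitive of
   m + q1 cos y + q2 sin y exists only if m = 0, and is then determined up to a
   constant; for a second primitive the zero-mean condition fixes the
   constant.  Solving orders 0, 1, 2 in this way expresses every profile
   through the amplitude A = v_0 on y = 0 and the free traces of v_1, v_2, p_0
   on y = 0; in particular (u_0, v_0) = A (- sqrt 2 cos y, 1).  At order 3 the
   pressure equation is, up to these known terms, the y-derivative of a
   periodic function, so the mean over a period of a quadratic trigonometric
   polynomial must vanish: this mean is exactly the amplitude equation.
   The chart statements follow by computing r'/r in each chart and solving
   the Riccati / linear equations for eps1, R2 and eps3. *)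

(* Coquelicot's rules are stated over a generic normed module; these
   specialisations to [R] let [apply] match goals by higher-order patterns. *)
Lemma D_eq (f : R -> R) (x l l' : R) : is_derive f x l -> l = l' -> is_derive f x l'.
Proof. intros H ->; exact H. Qed.

Lemma D_const (c x : R) : is_derive (fun _ => c) x 0.
Proof. apply (is_derive_const c). Qed.

Lemma D_id (x : R) : is_derive (fun z => z) x 1.
Proof. apply (is_derive_id x). Qed.

Lemma D_add (f g : R -> R) x df dg : is_derive f x df -> is_derive g x dg ->
  is_derive (fun z => f z + g z) x (df + dg).
Proof. intros; apply (is_derive_plus f g); auto. Qed.

Lemma D_sub (f g : R -> R) x df dg : is_derive f x df -> is_derive g x dg ->
  is_derive (fun z => f z - g z) x (df - dg).
Proof. intros; apply (is_derive_minus f g); auto. Qed.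

Lemma D_opp (f : R -> R) x df : is_derive f x df -> is_derive (fun z => - f z) x (- df).
Proof. intros; apply (is_derive_opp f); auto. Qed.

Lemma D_mul (f g : R -> R) x df dg : is_derive f x df -> is_derive g x dg ->
  is_derive (fun z => f z * g z) x (df * g x + f x * dg).
Proof. intros; apply (is_derive_mult f g); auto. intros; apply Rmult_comm. Qed.

Lemma D_pow (f : R -> R) n x df : is_derive f x df ->
  is_derive (fun z => f z ^ n) x (INR n * df * f x ^ Init.Nat.pred n).
Proof. intros; apply is_derive_pow; auto. Qed.

Lemma D_cos (f : R -> R) x df : is_derive f x df ->
  is_derive (fun z => cos (f z)) x (- sin (f x) * df).
Proof.
  intros H. apply is_derive_Reals in H. apply is_derive_Reals.
  apply (derivable_pt_lim_comp f cos); [exact H | apply derivable_pt_lim_cos].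
Qed.

Lemma D_sin (f : R -> R) x df : is_derive f x df ->
  is_derive (fun z => sin (f z)) x (cos (f x) * df).
Proof.
  intros H. apply is_derive_Reals in H. apply is_derive_Reals.
  apply (derivable_pt_lim_comp f sin); [exact H | apply derivable_pt_lim_sin].
Qed.

Definition xtrace (f : F3) (k : nat) (t z : R) : R := pd (List.repeat 0%nat k) f z 0 t.

(* Leaves are closed by derivative hypotheses
   in the context; traces by a hypothesis of the form
   [forall j k z, is_derive (xtrace (F j) k t) z (xtrace (F j) (S k) t z)],
   matched syntactically on F to avoid costly unification attempts. *)
Ltac dstep := match goal with
  | |- is_derive (fun _ => ?c) _ _ => apply (D_const c)
  | |- is_derive (fun z => z) _ _ => apply D_id
  | |- is_derive (fun z => @?f z + @?g z) _ _ => apply (D_add f g)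
  | |- is_derive (fun z => @?f z - @?g z) _ _ => apply (D_sub f g)
  | |- is_derive (fun z => - @?f z) _ _ => apply (D_opp f)
  | |- is_derive (fun z => @?f z * @?g z) _ _ => apply (D_mul f g)
  | |- is_derive (fun z => @?f z ^ ?n) _ _ => apply (D_pow f n)
  | |- is_derive (fun z => cos (@?f z)) _ _ => apply (D_cos f)
  | |- is_derive (fun z => sin (@?f z)) _ _ => apply (D_sin f)
  | H : is_derive ?f _ _ |- is_derive ?f _ _ => apply H
  | H : forall z, is_derive ?f z _ |- is_derive ?f _ _ => apply H
  | H : forall z, is_derive ?f z _ |- is_derive (fun z => ?f z) _ _ => apply H
  | H : forall (j k : nat) (z : _), is_derive (xtrace (?F _) _ ?t) z _
    |- is_derive (fun z => xtrace (?F _) _ ?t z) _ _ => apply H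
  | H : forall (j k : nat) (z : _), is_derive (xtrace (?F _) _ ?t) z _
    |- is_derive (xtrace (?F _) _ ?t) _ _ => apply H
  end.
Ltac dsolve := eapply D_eq; [repeat dstep | try ring].

Lemma locally_in_interval a b t : a < t < b -> locally t (fun s => a < s < b).
Proof.
  intros Ht.
  assert (Hd : 0 < Rmin (t - a) (b - t)) by (apply Rmin_pos; lra).
  exists (mkposreal _ Hd). intros s Hs.
  unfold ball in Hs; simpl in Hs; unfold AbsRing_ball, abs, minus, plus, opp in Hs; simpl in Hs.
  apply Rabs_def2 in Hs.
  pose proof (Rmin_l (t - a) (b - t)). pose proof (Rmin_r (t - a) (b - t)). lra.
Qed.

Lemma derive_zero_const_on a b (g : R -> R) : a < 0 < b ->
  (forall t, a < t < b -> is_derive g t 0) -> forall t, a < t < b -> g t = g 0.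
Proof.
  intros Hab Hd t Ht.
  assert (Hin : forall s, Rmin 0 t <= s <= Rmax 0 t -> a < s < b).
  { intros s Hs. destruct (Rle_dec 0 t);
      [rewrite Rmin_left, Rmax_right in Hs | rewrite Rmin_right, Rmax_left in Hs]; lra. }
  destruct (MVT_gen g 0 t (fun _ => 0)) as [c [_ Hc]].
  - intros s Hs. apply Hd, Hin. lra.
  - intros s Hs. apply derivable_continuous_pt. exists 0. apply is_derive_Reals, Hd, Hin, Hs.
  - lra.
Qed.

Lemma derive_zero_const (g : R -> R) : (forall y, is_derive g y 0) -> forall y, g y = g 0.
Proof.
  intros H y. pose proof (Rle_abs y). pose proof (Rle_abs (- y)). rewrite Rabs_Ropp in *.
  apply (derive_zero_const_on (- Rabs y - 1) (Rabs y + 1)); [lra | intros; apply H | lra].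
Qed.

Lemma same_derive_shift (g G dG : R -> R) : (forall y, is_derive g y (dG y)) ->
  (forall y, is_derive G y (dG y)) -> forall y, g y = G y + (g 0 - G 0).
Proof.
  intros Hg HG y.
  assert (H0 := derive_zero_const (fun z => g z - G z)). cbv beta in H0.
  assert (H0y : g y - G y = g 0 - G 0).
  { apply H0. intros z. eapply D_eq; [apply (D_sub g G); [apply Hg | apply HG] | ring]. }
  lra.
Qed.

Lemma Derive_periodic (g : R -> R) c : (forall y, ex_derive g y) ->
  (forall y, g (y + c) = g y) -> forall y, Derive g (y + c) = Derive g y.
Proof.
  intros Hd Hp y. symmetry.
  rewrite (Derive_ext g (fun z => g (z + c))) by (intros; symmetry; apply Hp).
  apply is_derive_unique.
  eapply D_eq.
  - apply (is_derive_comp g (fun z => z + c)); [apply Derive_correct, Hd | repeat dstep].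
  - simpl. unfold scal; simpl. unfold mult; simpl. ring.
Qed.

Definition trig (al be ga y : R) := al + be * cos y + ga * sin y.

Lemma RInt_trig al be ga : RInt (fun y => trig al be ga y) (- PI) PI = 2 * PI * al.
Proof.
  apply is_RInt_unique.
  replace (2 * PI * al) with
    (minus (al * PI + be * sin PI - ga * cos PI)
           (al * - PI + be * sin (- PI) - ga * cos (- PI))).
  - apply (is_RInt_derive (fun y => al * y + be * sin y - ga * cos y) (trig al be ga)).
    + intros x _. unfold trig. dsolve.
    + intros x _. apply (ex_derive_continuous (trig al be ga)).
      exists (al * 0 + be * (- sin x) + ga * cos x). unfold trig. dsolve.
  - rewrite sin_neg, cos_neg, sin_PI. unfold minus, plus, opp; simpl. ring.
Qed.

Lemma periodic_primitive (g : R -> R) m q1 q2 : (forall y, ex_derive g y) ->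
  (forall y, Derive g y = trig m q1 q2 y) -> (forall y, g (y + 2 * PI) = g y) ->
  m = 0 /\ forall y, g y = trig (g 0 + q2) (- q2) q1 y.
Proof.
  intros Hd HD Hp.
  assert (Hg : forall y, g y = m * y + q1 * sin y - q2 * cos y
                               + (g 0 - (m * 0 + q1 * sin 0 - q2 * cos 0))).
  { apply (same_derive_shift g (fun y => m * y + q1 * sin y - q2 * cos y) (trig m q1 q2)).
    - intros y. rewrite <- HD. apply Derive_correct, Hd.
    - intros y. unfold trig. dsolve. }
  rewrite sin_0, cos_0 in Hg.
  assert (Hm : m = 0).
  { pose proof (Hp 0) as H1. rewrite (Hg (0 + 2 * PI)), (Hg 0) in H1.
    rewrite Rplus_0_l, sin_2PI, cos_2PI, sin_0, cos_0 in H1.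
    pose proof PI_RGT_0. nra. }
  split; [exact Hm |]. intros y. rewrite Hg. unfold trig. subst m. ring.
Qed.

Lemma periodic_zero_mean_second_primitive (g : R -> R) m q1 q2 :
  (forall y, ex_derive g y) -> (forall y, ex_derive (Derive g) y) ->
  (forall y, Derive (Derive g) y = trig m q1 q2 y) -> (forall y, g (y + 2 * PI) = g y) ->
  RInt g (- PI) PI = 0 ->
  m = 0 /\ forall y, g y = trig 0 (- q1) (- q2) y.
Proof.
  intros Hd Hdd HD Hp HI.
  destruct (periodic_primitive (Derive g) m q1 q2 Hdd HD (Derive_periodic g _ Hd Hp))
    as [Hm Hg'].
  destruct (periodic_primitive g (Derive g 0 + q2) (- q2) q1 Hd Hg' Hp) as [_ Hg].
  split; [exact Hm |].
  assert (Hg2 : forall y, g y = trig (g 0 + q1) (- q1) (- q2) y).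
  { intros y. rewrite Hg. unfold trig. ring. }
  rewrite (RInt_ext g _ _ _ (fun y _ => Hg2 y)), RInt_trig in HI.
  assert (H0 : g 0 + q1 = 0) by (pose proof PI_RGT_0; nra).
  intros y. rewrite Hg2, H0. reflexivity.
Qed.

(* Inserting a multiple of 1 - (sin^2 + cos^2) lets [ring] close trigonometric goals. *)
Lemma add_pythagoras y k X Y : X = Y + k * (1 - (sin y * sin y + cos y * cos y)) -> X = Y.
Proof.
  intros H. pose proof (sin2_cos2 y) as Hsc. unfold Rsqr in Hsc.
  rewrite H, Hsc. ring.
Qed.

Lemma periodic_primitive_mean (G : R -> R) m q1 q2 q3 q4 q5 : (forall y, ex_derive G y) ->
  (forall y, Derive G y = m + q1 * cos y + q2 * sin y + q3 * (cos y * cos y)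
                          + q4 * (sin y * cos y) + q5 * (sin y * sin y)) ->
  (forall y, G (y + 2 * PI) = G y) -> m + (q3 + q5) / 2 = 0.
Proof.
  intros Hd HD Hp.
  set (M := m + (q3 + q5) / 2).
  set (H0 := fun y => M * y + q1 * sin y - q2 * cos y
                      + (q3 - q5) / 2 * (sin y * cos y) + q4 / 2 * (sin y * sin y)).
  assert (Hg : forall y, G y = H0 y + (G 0 - H0 0)).
  { apply (same_derive_shift G H0 (Derive G)).
    - intros y. apply Derive_correct, Hd.
    - intros y. unfold H0. dsolve. rewrite HD.
      apply (add_pythagoras y ((q3 + q5) / 2)). unfold M. field. }
  pose proof (Hp 0) as H1. rewrite (Hg (0 + 2 * PI)), (Hg 0) in H1. unfold H0 in H1.
  rewrite Rplus_0_l, sin_2PI, cos_2PI, sin_0, cos_0 in H1.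
  pose proof PI_RGT_0. nra.
Qed.

(* The same statement for y' = P (sin y) (cos y), P a quadratic polynomial:
   the mean is read off from the values of P at (+-1, 0) and (0, +-1). *)
Lemma periodic_primitive_mean_poly (G : R -> R) (P : R -> R -> R) :
  (forall y, ex_derive G y) -> (forall y, Derive G y = P (sin y) (cos y)) ->
  (forall s c, P s c = P 0 0 + (P 0 1 - P 0 (-1)) / 2 * c + (P 1 0 - P (-1) 0) / 2 * s
      + ((P 0 1 + P 0 (-1)) / 2 - P 0 0) * (c * c)
      + (P 1 1 - P 0 0 - (P 0 1 - P 0 (-1)) / 2 - (P 1 0 - P (-1) 0) / 2
         - ((P 0 1 + P 0 (-1)) / 2 - P 0 0) - ((P 1 0 + P (-1) 0) / 2 - P 0 0)) * (s * c)
      + ((P 1 0 + P (-1) 0) / 2 - P 0 0) * (s * s)) ->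
  (forall y, G (y + 2 * PI) = G y) ->
  (P 1 0 + P (-1) 0 + P 0 1 + P 0 (-1)) / 4 = 0.
Proof.
  intros Hd HD HP Hp.
  assert (H := periodic_primitive_mean G _ _ _ _ _ _ Hd
                 (fun y => eq_trans (HD y) (HP (sin y) (cos y))) Hp).
  lra.
Qed.

Lemma xtrace_derive a b f t : smooth_on a b f -> a < t < b ->
  forall k z, is_derive (xtrace f k t) z (xtrace f (S k) t z).
Proof.
  intros Hs Ht k z. apply (Derive_correct (xtrace f k t)).
  apply (Hs (List.repeat 0%nat k) z 0 t Ht).
Qed.

Lemma smooth_y_derivable a b f t l x : smooth_on a b f -> a < t < b ->
  forall y, ex_derive (fun w => pd l f x w t) y.
Proof. intros Hs Ht y. apply (Hs l x y t Ht). Qed.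

Lemma smooth_continuity_2d a b f t l x y : smooth_on a b f -> a < t < b ->
  continuity_2d_pt (fun u v => pd l f u v t) x y.
Proof.
  intros Hs Ht. apply continuity_2d_pt_filterlim.
  destruct (Hs l x y t Ht) as [_ [_ [_ Hc]]].
  apply (continuous_comp_2 (fun z : R * R => z) (fun _ => t)
           (fun (z : R * R) (s : R) => pd l f (fst z) (snd z) s) (x, y)).
  - apply continuous_id.
  - apply continuous_const.
  - exact Hc.
Qed.

Lemma smooth_mixed_partials a b f t x y : smooth_on a b f -> a < t < b ->
  py (px f) x y t = px (py f) x y t.
Proof.
  intros Hs Ht. symmetry. apply (Schwarz (fun u v => f u v t) x y).
  - exists (mkposreal 1 Rlt_0_1). intros u v _ _. repeat split.
    + apply (Hs nil u v t Ht).
    + apply (Hs nil u v t Ht).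
    + apply (Hs (cons 1%nat nil) u v t Ht).
    + apply (Hs (cons 0%nat nil) u v t Ht).
  - apply (smooth_continuity_2d a b f t (cons 0%nat (cons 1%nat nil)) x y Hs Ht).
  - apply (smooth_continuity_2d a b f t (cons 1%nat (cons 0%nat nil)) x y Hs Ht).
Qed.

Lemma pt_local a b (f : F3) (g : R -> R) t x y : a < t < b ->
  (forall s, a < s < b -> f x y s = g s) -> pt f x y t = Derive g t.
Proof.
  intros Ht H. apply Derive_ext_loc.
  eapply filter_imp; [exact H | exact (locally_in_interval a b t Ht)].
Qed.

Lemma px_trig (f : F3) t x y (al be ga : R -> R) dal dbe dga :
  (forall z w, f z w t = trig (al z) (be z) (ga z) w) ->
  is_derive al x dal -> is_derive be x dbe -> is_derive ga x dga ->
  px f x y t = trig dal dbe dga y.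
Proof.
  intros Hf H1 H2 H3. unfold px.
  rewrite (Derive_ext _ (fun z => trig (al z) (be z) (ga z) y)) by auto.
  apply is_derive_unique. unfold trig. dsolve.
Qed.

Lemma py_trig (f : F3) t x y al be ga : (forall w, f x w t = trig al be ga w) ->
  py f x y t = trig 0 ga (- be) y.
Proof.
  intros Hf. unfold py.
  rewrite (Derive_ext _ (fun w => trig al be ga w)) by auto.
  apply is_derive_unique. unfold trig. dsolve.
Qed.

Lemma sqrt2_sq : sqrt 2 ^ 2 = 2.
Proof. simpl. rewrite Rmult_1_r. apply sqrt_sqrt. lra. Qed.

Lemma sqrt2_cube : sqrt 2 ^ 3 = 2 * sqrt 2.
Proof. replace (sqrt 2 ^ 3) with (sqrt 2 ^ 2 * sqrt 2) by ring. rewrite sqrt2_sq. ring. Qed.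

Ltac sqrt2_ring := ring_simplify; rewrite sqrt2_sq; ring.

Section Hierarchy.

Variables (a b : R) (rho Rb eb : R -> R) (u v p : nat -> F3).
Hypothesis Hh : hierarchy a b rho Rb eb u v p.

Lemma u_smooth j : smooth_on a b (u j).
Proof. exact (proj1 (proj1 Hh j)). Qed.

Lemma v_smooth j : smooth_on a b (v j).
Proof. exact (proj1 (proj2 (proj1 Hh j))). Qed.

Lemma p_smooth j : smooth_on a b (p j).
Proof. exact (proj2 (proj2 (proj1 Hh j))). Qed.

Lemma v0_profile t : a < t < b -> forall x y, v 0%nat x y t = xtrace (v 0%nat) 0 t x.
Proof.
  intros Ht x. apply (derive_zero_const (fun w => v 0%nat x w t)). intros w.
  eapply D_eq.
  - apply Derive_correct, (smooth_y_derivable a b _ t nil x (v_smooth 0) Ht).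
  - destruct Hh as [_ [_ [_ He]]]. change (py (v 0%nat) x w t = 0).
    rewrite (proj1 (He 0%nat x w t Ht)). cbn [lower Nat.leb]. ring.
Qed.

Section FixedTime.

Variable t : R.
Hypothesis Ht : a < t < b.

(* The free functions of x entering orders 0, 1, 2: A = v_0 on y = 0 is the
   amplitude, B and C are v_1 and v_2 on y = 0, P0 is p_0 on y = 0. *)
Local Notation A k := (xtrace (v 0%nat) k t).
Local Notation B k := (xtrace (v 1%nat) k t).
Local Notation C k := (xtrace (v 2%nat) k t).
Local Notation P0 k := (xtrace (p 0%nat) k t).

Lemma v_trace_derive j k z : is_derive (xtrace (v j) k t) z (xtrace (v j) (S k) t z).
Proof. apply (xtrace_derive a b (v j) t (v_smooth j) Ht). Qed.

Lemma p_trace_derive j k z : is_derive (xtrace (p j) k t) z (xtrace (p j) (S k) t z).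
Proof. apply (xtrace_derive a b (p j) t (p_smooth j) Ht). Qed.

Lemma hier_periodic j x y :
  u j x (y + 2 * PI) t = u j x y t /\ v j x (y + 2 * PI) t = v j x y t /\
  p j x (y + 2 * PI) t = p j x y t.
Proof. exact (proj1 (proj2 Hh) j x y t Ht). Qed.

Lemma hier_mean j x : RInt (fun y => u j x y t) (- PI) PI = 0.
Proof. exact (proj1 (proj2 (proj2 Hh)) j x t Ht). Qed.

Lemma hier_order j x y : order_eqs rho Rb eb u v p j x y t.
Proof. exact (proj2 (proj2 (proj2 Hh)) j x y t Ht). Qed.

Ltac expand_order j x y Hcont Hmom Hpres :=
  let H := fresh in
  pose proof (hier_order j x y) as H; unfold order_eqs in H;
  cbn [lower cv sum_f_R0 Nat.leb Nat.sub Nat.eqb] in H;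
  destruct H as [Hcont [Hmom Hpres]].

Lemma u_y_derivable j l x y : ex_derive (fun w => pd l (u j) x w t) y.
Proof. exact (smooth_y_derivable a b (u j) t l x (u_smooth j) Ht y). Qed.

Lemma v_y_derivable j l x y : ex_derive (fun w => pd l (v j) x w t) y.
Proof. exact (smooth_y_derivable a b (v j) t l x (v_smooth j) Ht y). Qed.

Lemma p_y_derivable j l x y : ex_derive (fun w => pd l (p j) x w t) y.
Proof. exact (smooth_y_derivable a b (p j) t l x (p_smooth j) Ht y). Qed.

Lemma px_v0 x y : px (v 0%nat) x y t = trig (A 1 x) 0 0 y.
Proof.
  pose proof v_trace_derive as Dv.
  apply (px_trig _ t x y (A 0) (fun _ => 0) (fun _ => 0)); [| dsolve ..].
  intros z w. rewrite (v0_profile t Ht). unfold trig. ring.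
Qed.

Lemma u0_profile x y : u 0%nat x y t = trig 0 (- (sqrt 2 * A 0 x)) 0 y.
Proof.
  destruct (periodic_zero_mean_second_primitive (fun w => u 0%nat x w t) 0
              (sqrt 2 * A 0 x) 0) as [_ Hf].
  - apply (u_y_derivable 0 nil).
  - apply (u_y_derivable 0 (cons 1%nat nil)).
  - intros w. expand_order 0%nat x w Hc Hm Hp.
    change (py (py (u 0%nat)) x w t = trig 0 (sqrt 2 * A 0 x) 0 w).
    rewrite Hm, (v0_profile t Ht). unfold trig. ring.
  - intros w. apply hier_periodic.
  - apply hier_mean.
  - rewrite Hf. unfold trig. ring.
Qed.

Lemma px_u0 x y : px (u 0%nat) x y t = trig 0 (- (sqrt 2 * A 1 x)) 0 y.
Proof.
  pose proof v_trace_derive as Dv.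
  apply (px_trig _ t x y (fun _ => 0) (fun z => - (sqrt 2 * A 0 z)) (fun _ => 0)
           0 (- (sqrt 2 * A 1 x)) 0); [exact u0_profile | dsolve ..].
Qed.

Lemma py_u0 x y : py (u 0%nat) x y t = trig 0 0 (sqrt 2 * A 0 x) y.
Proof. rewrite (py_trig _ t x y _ _ _ (u0_profile x)). unfold trig. ring. Qed.

Lemma p0_profile x y :
  p 0%nat x y t = trig (P0 0 x - 2 * sqrt 2 * A 1 x) (2 * sqrt 2 * A 1 x) 0 y.
Proof.
  pose proof v_trace_derive as Dv.
  destruct (periodic_primitive (fun w => p 0%nat x w t) 0 0 (- (2 * sqrt 2 * A 1 x)))
    as [_ Hf].
  - apply (p_y_derivable 0 nil).
  - intros w. expand_order 0%nat x w Hc Hm Hp.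
    change (py (p 0%nat) x w t = trig 0 0 (- (2 * sqrt 2 * A 1 x)) w).
    rewrite Hp, Hc.
    rewrite (px_trig (py (u 0%nat)) t x w (fun _ => 0) (fun _ => 0)
               (fun z => sqrt 2 * A 0 z) 0 0 (sqrt 2 * A 1 x) py_u0) by dsolve.
    rewrite px_v0. unfold trig; ring.
  - intros w. apply hier_periodic.
  - rewrite Hf. unfold trig. change (p 0%nat x 0 t) with (P0 0 x). ring.
Qed.

Lemma v1_profile x y : v 1%nat x y t = trig (B 0 x) 0 (sqrt 2 * A 1 x) y.
Proof.
  destruct (periodic_primitive (fun w => v 1%nat x w t) 0 (sqrt 2 * A 1 x) 0) as [_ Hf].
  - apply (v_y_derivable 1 nil).
  - intros w. expand_order 1%nat x w Hc Hm Hp.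
    change (py (v 1%nat) x w t = trig 0 (sqrt 2 * A 1 x) 0 w).
    rewrite Hc, px_u0. unfold trig; ring.
  - intros w. apply hier_periodic.
  - rewrite Hf. unfold trig. change (v 1%nat x 0 t) with (B 0 x). ring.
Qed.

Lemma u1_profile x y :
  u 1%nat x y t = trig 0 (- (sqrt 2 * B 0 x)) (- (sqrt 2 * (A 0 x * A 0 x))) y.
Proof.
  destruct (periodic_zero_mean_second_primitive (fun w => u 1%nat x w t) 0
              (sqrt 2 * B 0 x) (sqrt 2 * (A 0 x * A 0 x))) as [_ Hf].
  - apply (u_y_derivable 1 nil).
  - apply (u_y_derivable 1 (cons 1%nat nil)).
  - intros w. expand_order 1%nat x w Hc Hm Hp.
    change (py (py (u 1%nat)) x w t
            = trig 0 (sqrt 2 * B 0 x) (sqrt 2 * (A 0 x * A 0 x)) w).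
    rewrite Hm, px_u0, py_u0, v1_profile, (v0_profile t Ht). unfold trig; ring.
  - intros w. apply hier_periodic.
  - apply hier_mean.
  - rewrite Hf. unfold trig. ring.
Qed.

Lemma px_u1 x y : px (u 1%nat) x y t =
  trig 0 (- (sqrt 2 * B 1 x)) (- (sqrt 2 * (2 * (A 0 x * A 1 x)))) y.
Proof.
  pose proof v_trace_derive as Dv.
  apply (px_trig _ t x y (fun _ => 0) (fun z => - (sqrt 2 * B 0 z))
           (fun z => - (sqrt 2 * (A 0 z * A 0 z)))); [exact u1_profile | dsolve ..].
Qed.

Lemma v2_profile x y : v 2%nat x y t =
  trig (C 0 x + 2 * sqrt 2 * (A 0 x * A 1 x)) (- (2 * sqrt 2 * (A 0 x * A 1 x)))
       (sqrt 2 * B 1 x) y.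
Proof.
  destruct (periodic_primitive (fun w => v 2%nat x w t) 0 (sqrt 2 * B 1 x)
              (2 * sqrt 2 * (A 0 x * A 1 x))) as [_ Hf].
  - apply (v_y_derivable 2 nil).
  - intros w. expand_order 2%nat x w Hc Hm Hp.
    change (py (v 2%nat) x w t = trig 0 (sqrt 2 * B 1 x) (2 * sqrt 2 * (A 0 x * A 1 x)) w).
    rewrite Hc, px_u1. unfold trig; ring.
  - intros w. apply hier_periodic.
  - rewrite Hf. unfold trig. change (v 2%nat x 0 t) with (C 0 x). ring.
Qed.

Definition u2_cos x := sqrt 2 * (C 0 x + 2 * sqrt 2 * (A 0 x * A 1 x))
  - sqrt 2 * (A 0 x * A 0 x * A 0 x) + 3 * sqrt 2 * A 2 x + Rb t * A 0 x.
Definition u2_cos_x x := sqrt 2 * (C 1 x + 2 * sqrt 2 * (A 1 x * A 1 x + A 0 x * A 2 x))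
  - sqrt 2 * (3 * (A 0 x * A 0 x) * A 1 x) + 3 * sqrt 2 * A 3 x + Rb t * A 1 x.
Definition u2_cos_xx x :=
  sqrt 2 * (C 2 x + 2 * sqrt 2 * (3 * (A 1 x * A 2 x) + A 0 x * A 3 x))
  - sqrt 2 * (6 * (A 0 x * A 1 x * A 1 x) + 3 * (A 0 x * A 0 x) * A 2 x)
  + 3 * sqrt 2 * A 4 x + Rb t * A 2 x.
Definition u2_sin x := - (2 * sqrt 2 * (A 0 x * B 0 x)).
Definition u2_sin_x x := - (2 * sqrt 2 * (A 1 x * B 0 x + A 0 x * B 1 x)).
Definition u2_sin_xx x :=
  - (2 * sqrt 2 * (A 2 x * B 0 x + 2 * (A 1 x * B 1 x) + A 0 x * B 2 x)).

Lemma u2_coeff_derives :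
  (forall x, is_derive u2_cos x (u2_cos_x x)) /\
  (forall x, is_derive u2_cos_x x (u2_cos_xx x)) /\
  (forall x, is_derive u2_sin x (u2_sin_x x)) /\
  (forall x, is_derive u2_sin_x x (u2_sin_xx x)).
Proof.
  pose proof v_trace_derive as Dv.
  unfold u2_cos, u2_cos_x, u2_cos_xx, u2_sin, u2_sin_x, u2_sin_xx.
  split; [| split; [| split]]; intros x; dsolve.
Qed.

Lemma u2_profile x y : u 2%nat x y t = trig 0 (- u2_cos x) (u2_sin x) y.
Proof.
  pose proof v_trace_derive as Dv. pose proof p_trace_derive as Dp.
  assert (Hpxx_u0 : forall w, px (px (u 0%nat)) x w t = trig 0 (- (sqrt 2 * A 2 x)) 0 w).
  { intros w. apply (px_trig _ t x w (fun _ => 0) (fun z => - (sqrt 2 * A 1 z)) (fun _ => 0));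
      [exact px_u0 | dsolve ..]. }
  assert (Hpx_p0 : forall w, px (p 0%nat) x w t =
            trig (P0 1 x - 2 * sqrt 2 * A 2 x) (2 * sqrt 2 * A 2 x) 0 w).
  { intros w. apply (px_trig _ t x w (fun z => P0 0 z - 2 * sqrt 2 * A 1 z)
             (fun z => 2 * sqrt 2 * A 1 z) (fun _ => 0)); [exact p0_profile | dsolve ..]. }
  destruct (periodic_zero_mean_second_primitive (fun w => u 2%nat x w t)
              (P0 1 x - 2 * sqrt 2 * A 2 x - 2 * (A 0 x * A 1 x)) (u2_cos x)
              (- u2_sin x)) as [_ Hf].
  - apply (u_y_derivable 2 nil).
  - apply (u_y_derivable 2 (cons 1%nat nil)).
  - intros w. expand_order 2%nat x w Hc Hm Hp.
    change (py (py (u 2%nat)) x w t = trig (P0 1 x - 2 * sqrt 2 * A 2 x - 2 * (A 0 x * A 1 x))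
              (u2_cos x) (- u2_sin x) w).
    rewrite Hm, px_u1, px_u0, Hpxx_u0, Hpx_p0, py_u0.
    rewrite (py_trig (u 1%nat) t x w _ _ _ (u1_profile x)).
    rewrite v2_profile, v1_profile, (v0_profile t Ht), u0_profile.
    apply (add_pythagoras w (2 * (A 0 x * A 1 x))).
    unfold trig, u2_cos, u2_sin. sqrt2_ring.
  - intros w. apply hier_periodic.
  - apply hier_mean.
  - rewrite Hf. unfold trig. ring.
Qed.


Lemma px_u2 x y : px (u 2%nat) x y t = trig 0 (- u2_cos_x x) (u2_sin_x x) y.
Proof.
  destruct u2_coeff_derives as [D1 [D2 [D3 D4]]].
  apply (px_trig _ t x y (fun _ => 0) (fun z => - u2_cos z) u2_sin);
    [exact u2_profile | dsolve ..].
Qed.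

Lemma pxx_u2 x y : px (px (u 2%nat)) x y t = trig 0 (- u2_cos_xx x) (u2_sin_xx x) y.
Proof.
  destruct u2_coeff_derives as [D1 [D2 [D3 D4]]].
  apply (px_trig _ t x y (fun _ => 0) (fun z => - u2_cos_x z) u2_sin_x);
    [exact px_u2 | dsolve ..].
Qed.

Lemma py_v3 x y : py (v 3%nat) x y t = trig 0 (u2_cos_x x) (- u2_sin_x x) y.
Proof. expand_order 3%nat x y Hc Hm Hp. rewrite Hc, px_u2. unfold trig; ring. Qed.

Lemma pyx_v3 x y : py (px (v 3%nat)) x y t = trig 0 (u2_cos_xx x) (- u2_sin_xx x) y.
Proof.
  destruct u2_coeff_derives as [D1 [D2 [D3 D4]]].
  rewrite (smooth_mixed_partials a b (v 3%nat) t x y (v_smooth 3) Ht).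
  apply (px_trig _ t x y (fun _ => 0) u2_cos_x (fun z => - u2_sin_x z));
    [exact py_v3 | dsolve ..].
Qed.

Lemma px_v1 x y : px (v 1%nat) x y t = trig (B 1 x) 0 (sqrt 2 * A 2 x) y.
Proof.
  pose proof v_trace_derive as Dv.
  apply (px_trig _ t x y (B 0) (fun _ => 0) (fun z => sqrt 2 * A 1 z));
    [exact v1_profile | dsolve ..].
Qed.

Lemma px_v2 x y : px (v 2%nat) x y t =
  trig (C 1 x + 2 * sqrt 2 * (A 1 x * A 1 x + A 0 x * A 2 x))
       (- (2 * sqrt 2 * (A 1 x * A 1 x + A 0 x * A 2 x))) (sqrt 2 * B 2 x) y.
Proof.
  pose proof v_trace_derive as Dv.
  apply (px_trig _ t x y (fun z => C 0 z + 2 * sqrt 2 * (A 0 z * A 1 z))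
           (fun z => - (2 * sqrt 2 * (A 0 z * A 1 z))) (fun z => sqrt 2 * B 1 z));
    [exact v2_profile | dsolve ..].
Qed.

Lemma pxx_v2 x y : px (px (v 2%nat)) x y t =
  trig (C 2 x + 2 * sqrt 2 * (3 * (A 1 x * A 2 x) + A 0 x * A 3 x))
       (- (2 * sqrt 2 * (3 * (A 1 x * A 2 x) + A 0 x * A 3 x))) (sqrt 2 * B 3 x) y.
Proof.
  pose proof v_trace_derive as Dv.
  apply (px_trig _ t x y
           (fun z => C 1 z + 2 * sqrt 2 * (A 1 z * A 1 z + A 0 z * A 2 z))
           (fun z => - (2 * sqrt 2 * (A 1 z * A 1 z + A 0 z * A 2 z)))
           (fun z => sqrt 2 * B 2 z)); [exact px_v2 | dsolve ..].
Qed.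

Lemma py_v0 x y : py (v 0%nat) x y t = 0.
Proof.
  rewrite (py_trig _ t x y (A 0 x) 0 0); [unfold trig; ring |].
  intros w. rewrite (v0_profile t Ht). unfold trig; ring.
Qed.

Lemma py_v1 x y : py (v 1%nat) x y t = trig 0 (sqrt 2 * A 1 x) 0 y.
Proof. rewrite (py_trig _ t x y _ _ _ (v1_profile x)). unfold trig; ring. Qed.

Lemma py_v2 x y : py (v 2%nat) x y t = trig 0 (sqrt 2 * B 1 x) (2 * sqrt 2 * (A 0 x * A 1 x)) y.
Proof. rewrite (py_trig _ t x y _ _ _ (v2_profile x)). unfold trig; ring. Qed.

(* v_0 does not depend on y, hence neither does its time derivative. *)
Lemma pt_v0 x y : pt (v 0%nat) x y t = pt (v 0%nat) x 0 t.
Proof.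
  apply (pt_local a b (v 0%nat) (fun s => v 0%nat x 0 s) t x y Ht).
  intros s Hs. apply (v0_profile s Hs).
Qed.


(* The order-3 pressure equation is a total y-derivative up to terms known
   from orders 0, 1, 2: it is an equation for the following primitive. *)
Definition pressure3_primitive x w :=
  p 3%nat x w t + px (u 3%nat) x w t - sqrt 2 * (cos w * px (v 3%nat) x w t).

Lemma pressure3_primitive_derive x y :
  is_derive (pressure3_primitive x) y
    (py (p 3%nat) x y t + px (py (u 3%nat)) x y t
     - sqrt 2 * (- sin y * px (v 3%nat) x y t + cos y * py (px (v 3%nat)) x y t)).
Proof.
  rewrite <- (smooth_mixed_partials a b (u 3%nat) t x y (u_smooth 3) Ht).
  assert (D1 : is_derive (fun w => p 3%nat x w t) y (py (p 3%nat) x y t))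
    by apply Derive_correct, (p_y_derivable 3 nil).
  assert (D2 : is_derive (fun w => px (u 3%nat) x w t) y (py (px (u 3%nat)) x y t))
    by apply Derive_correct, (u_y_derivable 3 (cons 0%nat nil)).
  assert (D3 : is_derive (fun w => px (v 3%nat) x w t) y (py (px (v 3%nat)) x y t))
    by apply Derive_correct, (v_y_derivable 3 (cons 0%nat nil)).
  unfold pressure3_primitive. dsolve.
Qed.

Lemma pressure3_primitive_periodic x y :
  pressure3_primitive x (y + 2 * PI) = pressure3_primitive x y.
Proof.
  assert (Hu : px (u 3%nat) x (y + 2 * PI) t = px (u 3%nat) x y t).
  { apply Derive_ext. intros z. apply hier_periodic. }
  assert (Hv : px (v 3%nat) x (y + 2 * PI) t = px (v 3%nat) x y t).
  { apply Derive_ext. intros z. apply hier_periodic. }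
  unfold pressure3_primitive.
  rewrite (proj2 (proj2 (hier_periodic 3 x y))), Hu, Hv, cos_plus, cos_2PI, sin_2PI. ring.
Qed.

(* Solvability at order 3: the mean over a period of the derivative of the
   periodic [pressure3_primitive] vanishes, which is the amplitude equation
   d_t A = - rho A - 3 d_x^4 A - sqrt 2 Rb d_x^2 A + 2/3 d_x^2 (A^3). *)
Lemma amplitude_solvability x :
  pt (v 0%nat) x 0 t = - rho t * A 0 x - 3 * A 4 x - sqrt 2 * Rb t * A 2 x
    + 2 / 3 * (6 * (A 0 x * A 1 x * A 1 x) + 3 * (A 0 x * A 0 x) * A 2 x).
Proof.
  evar (Q : R -> R -> R).
  assert (HD : forall y, Derive (pressure3_primitive x) y = Q (sin y) (cos y)).
  { intros y. rewrite (is_derive_unique _ _ _ (pressure3_primitive_derive x y)).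
    expand_order 3%nat x y Hc Hm Hp. rewrite Hp.
    rewrite pyx_v3, pxx_v2, px_v2, px_v1, px_v0, py_v0, py_v1, py_v2, pt_v0, py_v3.
    rewrite u2_profile, u1_profile, u0_profile, v2_profile, v1_profile, (v0_profile t Ht).
    unfold trig, u2_cos, u2_cos_x, u2_cos_xx, u2_sin, u2_sin_x, u2_sin_xx. ring_simplify.
    (* read the right-hand side as a polynomial Q in (sin y, cos y) *)
    match goal with |- ?L = _ =>
      let L' := eval pattern (sin y), (cos y) in L in
      match L' with ?F _ _ => let e := eval cbv delta [Q] in Q in unify e F end end.
    subst Q. reflexivity. }
  (* the mean of Q over a period vanishes; Q is quadratic, so [field]
     checks its interpolation identity *)
  assert (HM := periodic_primitive_mean_poly _ Q
                  (fun y => ex_intro _ _ (pressure3_primitive_derive x y)) HD).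
  specialize (HM ltac:(intros s c; subst Q; cbv beta; field)
                     (pressure3_primitive_periodic x)).
  subst Q. cbv beta in HM. ring_simplify in HM. rewrite sqrt2_sq, sqrt2_cube in HM.
  ring_simplify. rewrite ?sqrt2_sq, ?sqrt2_cube. lra.
Qed.

End FixedTime.
End Hierarchy.

Lemma dxx_cube_trace a b f t x : smooth_on a b f -> a < t < b ->
  dx (dx (fun z s => f z 0 s ^ 3)) x t =
  6 * (xtrace f 0 t x * xtrace f 1 t x * xtrace f 1 t x)
  + 3 * (xtrace f 0 t x * xtrace f 0 t x) * xtrace f 2 t x.
Proof.
  intros Hs Ht.
  pose proof (xtrace_derive a b f t Hs Ht 0) as D0.
  pose proof (xtrace_derive a b f t Hs Ht 1) as D1.
  unfold dx. change (fun w => f w 0 t ^ 3) with (fun w => xtrace f 0 t w ^ 3).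
  rewrite (Derive_ext (fun z => Derive (fun w => xtrace f 0 t w ^ 3) z)
             (fun z => 3 * (xtrace f 0 t z * xtrace f 0 t z) * xtrace f 1 t z)).
  - apply is_derive_unique. dsolve.
  - intros z. apply is_derive_unique. dsolve. simpl. ring.
Qed.

Lemma amplitude_law_of_hierarchy a b rho Rb eb u v p :
  hierarchy a b rho Rb eb u v p ->
  amplitude_law a b (fun t => - rho t) (fun t => - sqrt 2 * Rb t) u v.
Proof.
  intros H. exists (fun x t => v 0%nat x 0 t). split.
  - intros x y t Ht. split.
    + exact (v0_profile a b rho Rb eb u v p H t Ht x y).
    + rewrite (u0_profile a b rho Rb eb u v p H t Ht). unfold trig.
      change (xtrace (v 0%nat) 0 t x) with (v 0%nat x 0 t). ring.
  - intros x t Ht.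
    rewrite (dxx_cube_trace a b (v 0%nat) t x (v_smooth a b rho Rb eb u v p H 0) Ht).
    change (dt (fun x t => v 0%nat x 0 t) x t) with (pt (v 0%nat) x 0 t).
    rewrite (amplitude_solvability a b rho Rb eb u v p H t Ht x).
    change (dx (dx (dx (dx (fun x t => v 0%nat x 0 t)))) x t) with (xtrace (v 0%nat) 4 t x).
    change (dx (dx (fun x t => v 0%nat x 0 t)) x t) with (xtrace (v 0%nat) 2 t x).
    change (v 0%nat x 0 t) with (xtrace (v 0%nat) 0 t x).
    ring.
Qed.

Lemma amplitude_law_ext a b c0 c2 c0' c2' u v :
  (forall t, a < t < b -> c0 t = c0' t) -> (forall t, a < t < b -> c2 t = c2' t) ->
  amplitude_law a b c0 c2 u v -> amplitude_law a b c0' c2' u v.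
Proof.
  intros H0 H2 [A [HA HB]]. exists A. split; [exact HA |].
  intros x t Ht. rewrite <- H0, <- H2 by exact Ht. apply HB, Ht.
Qed.

Lemma log_derivative (r : R -> R) t c : 0 < r t -> is_derive r t (c * r t) ->
  Derive r t / r t = c.
Proof. intros Hr Hd. rewrite (is_derive_unique _ _ _ Hd). field. lra. Qed.

(* The Riccati equation e' = k e^2 on an interval around 0 is solved by
   e t = e 0 / (1 - k e 0 t): the quantity (e t (1 - k e0 t) - e0) exp(-k int_0^t e)
   has zero derivative and vanishes at 0. *)
Lemma riccati_solution a b (e : R -> R) k : a < 0 < b ->
  (forall t, a < t < b -> is_derive e t (k * e t ^ 2)) ->
  forall t, a < t < b -> 1 - k * e 0 * t <> 0 /\ e t = e 0 / (1 - k * e 0 * t).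
Proof.
  intros Hab Hd.
  assert (Hcont : forall s, a < s < b -> continuous e s).
  { intros s Hs. apply (ex_derive_continuous e). eexists; apply Hd, Hs. }
  set (I := fun s => RInt e 0 s).
  assert (HI : forall s, a < s < b -> is_derive I s (e s)).
  { intros s Hs. apply (is_derive_RInt e I 0 s); [| apply Hcont, Hs].
    eapply filter_imp; [| exact (locally_in_interval a b s Hs)].
    intros z Hz. apply (RInt_correct e 0 z). apply (ex_RInt_continuous e).
    intros w Hw. apply Hcont.
    destruct (Rle_dec 0 z);
      [rewrite Rmin_left, Rmax_right in Hw | rewrite Rmin_right, Rmax_left in Hw]; lra. }
  set (psi := fun s => (e s * (1 - k * e 0 * s) - e 0) * exp (- (k * I s))).
  assert (Hpsi : forall s, a < s < b -> psi s = psi 0).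
  { apply (derive_zero_const_on a b psi Hab). intros s Hs. unfold psi.
    pose proof (Hd s Hs). pose proof (HI s Hs).
    eapply D_eq.
    - apply (D_mul (fun s => e s * (1 - k * e 0 * s) - e 0) (fun s => exp (- (k * I s)))).
      + repeat dstep.
      + apply is_derive_Reals, (derivable_pt_lim_comp (fun s => - (k * I s)) exp).
        * apply is_derive_Reals. repeat dstep.
        * apply derivable_pt_lim_exp.
    - simpl. ring. }
  intros t Ht. pose proof (Hpsi t Ht) as H0. unfold psi in H0.
  assert (HI0 : I 0 = 0) by (unfold I; rewrite RInt_point; reflexivity).
  rewrite HI0 in H0.
  replace (exp (- (k * 0))) with 1 in H0 by (rewrite Rmult_0_r, Ropp_0, exp_0; reflexivity).
  pose proof (exp_pos (- (k * I t))) as Hpos.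
  assert (Hz : e t * (1 - k * e 0 * t) = e 0).
  { assert (Hz0 : e t * (1 - k * e 0 * t) - e 0 = 0); [| lra].
    apply (Rmult_eq_reg_r (exp (- (k * I t)))); [| lra]. rewrite H0. ring. }
  assert (Hn : 1 - k * e 0 * t <> 0).
  { intros Hn. rewrite Hn, Rmult_0_r in Hz.
    rewrite <- Hz, Rmult_0_r, Rmult_0_l, Rminus_0_r in Hn. lra. }
  split; [exact Hn |]. rewrite <- Hz at 1. field. exact Hn.
Qed.

Lemma chart_K1 (a b : R) (r1 e1 : R -> R) (u v p : nat -> F3) :
  a < 0 < b ->
  (forall t, a < t < b -> 0 < r1 t /\
     is_derive r1 t (- / 2 * r1 t * e1 t) /\ is_derive e1 t (3 * e1 t ^ 2)) ->
  hierarchy a b (fun t => Derive r1 t / r1 t) (fun _ => -1) e1 u v p ->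
  (forall t, a < t < b -> e1 t = 2 * e1 0 / (2 - 6 * e1 0 * t)) /\
  amplitude_law a b (fun t => e1 t / 2) (fun _ => sqrt 2) u v.
Proof.
  intros Hab Hr H. split.
  - intros t Ht.
    destruct (riccati_solution a b e1 3 Hab (fun s Hs => proj2 (proj2 (Hr s Hs))) t Ht)
      as [Hn ->].
    field; repeat split; intros Hz; apply Hn; lra.
  - refine (amplitude_law_ext a b _ _ _ _ u v _ _ (amplitude_law_of_hierarchy _ _ _ _ _ _ _ _ H)).
    + intros t Ht. destruct (Hr t Ht) as [Hpos [Hd _]].
      rewrite (log_derivative r1 t (- / 2 * e1 t) Hpos); [field | eapply D_eq; [exact Hd | ring]].
    + intros t _. ring.
Qed.

Lemma chart_K2 (a b : R) (r2 R2 : R -> R) (u v p : nat -> F3) :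
  a < 0 < b ->
  (forall t, a < t < b -> 0 < r2 t /\ is_derive r2 t 0 /\ is_derive R2 t 1) ->
  hierarchy a b (fun t => Derive r2 t / r2 t) R2 (fun _ => 1) u v p ->
  (forall t, a < t < b -> R2 t = R2 0 + t) /\
  amplitude_law a b (fun _ => 0) (fun t => - sqrt 2 * R2 t) u v.
Proof.
  intros Hab Hr H. split.
  - intros t Ht.
    assert (Hc := derive_zero_const_on a b (fun s => R2 s - s) Hab).
    cbv beta in Hc. rewrite Rminus_0_r in Hc.
    enough (R2 t - t = R2 0) by lra.
    apply Hc; [| exact Ht]. intros s Hs. eapply D_eq.
    + apply (D_sub R2 (fun z => z)); [apply (Hr s Hs) | apply D_id].
    + ring.
  - refine (amplitude_law_ext a b _ _ _ _ u v _ _ (amplitude_law_of_hierarchy _ _ _ _ _ _ _ _ H)).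
    + intros t Ht. destruct (Hr t Ht) as [Hpos [Hd _]].
      rewrite (log_derivative r2 t 0 Hpos); [ring | eapply D_eq; [exact Hd | ring]].
    + intros t _. reflexivity.
Qed.

Lemma chart_K3 (a b : R) (r3 e3 : R -> R) (u v p : nat -> F3) :
  a < 0 < b ->
  (forall t, a < t < b -> 0 < r3 t /\
     is_derive r3 t (/ 2 * r3 t * e3 t) /\ is_derive e3 t (- 3 * e3 t ^ 2)) ->
  hierarchy a b (fun t => Derive r3 t / r3 t) (fun _ => 1) e3 u v p ->
  (forall t, a < t < b -> e3 t = 2 * e3 0 / (2 + 6 * e3 0 * t)) /\
  amplitude_law a b (fun t => - (e3 t / 2)) (fun _ => - sqrt 2) u v.
Proof.
  intros Hab Hr H. split.
  - intros t Ht.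
    destruct (riccati_solution a b e3 (- 3) Hab (fun s Hs => proj2 (proj2 (Hr s Hs))) t Ht)
      as [Hn ->].
    field; repeat split; intros Hz; apply Hn; lra.
  - refine (amplitude_law_ext a b _ _ _ _ u v _ _ (amplitude_law_of_hierarchy _ _ _ _ _ _ _ _ H)).
    + intros t Ht. destruct (Hr t Ht) as [Hpos [Hd _]].
      rewrite (log_derivative r3 t (/ 2 * e3 t) Hpos); [field | eapply D_eq; [exact Hd | ring]].
    + intros t _. ring.
Qed.

Theorem theorem5p4 :
  (* blown-up system: general (Rbar, epsbar) on S^1 *)
  (forall (a b : R) (r Rb eb : R -> R) (u v p : nat -> F3),
     (forall t, a < t < b -> 0 < r t /\ ex_derive r t /\ Rb t ^ 2 + eb t ^ 2 = 1) ->
     hierarchy a b (fun t => Derive r t / r t) Rb eb u v p ->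
     amplitude_law a b (fun t => - (Derive r t / r t)) (fun t => - sqrt 2 * Rb t) u v) /\
  (* chart K1: Rbar = -1, epsbar = eps1, r1' = -r1 eps1/2, eps1' = 3 eps1^2 *)
  (forall (a b : R) (r1 e1 : R -> R) (u v p : nat -> F3),
     a < 0 < b ->
     (forall t, a < t < b -> 0 < r1 t /\
        is_derive r1 t (- / 2 * r1 t * e1 t) /\ is_derive e1 t (3 * e1 t ^ 2)) ->
     hierarchy a b (fun t => Derive r1 t / r1 t) (fun _ => -1) e1 u v p ->
     (forall t, a < t < b -> e1 t = 2 * e1 0 / (2 - 6 * e1 0 * t)) /\
     amplitude_law a b (fun t => e1 t / 2) (fun _ => sqrt 2) u v) /\
  (* chart K2: epsbar = 1, r2' = 0, R2' = 1 *)
  (forall (a b : R) (r2 R2 : R -> R) (u v p : nat -> F3),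
     a < 0 < b ->
     (forall t, a < t < b -> 0 < r2 t /\
        is_derive r2 t 0 /\ is_derive R2 t 1) ->
     hierarchy a b (fun t => Derive r2 t / r2 t) R2 (fun _ => 1) u v p ->
     (forall t, a < t < b -> R2 t = R2 0 + t) /\
     amplitude_law a b (fun _ => 0) (fun t => - sqrt 2 * R2 t) u v) /\
  (* chart K3: Rbar = 1, epsbar = eps3, r3' = r3 eps3/2, eps3' = -3 eps3^2 *)
  (forall (a b : R) (r3 e3 : R -> R) (u v p : nat -> F3),
     a < 0 < b ->
     (forall t, a < t < b -> 0 < r3 t /\
        is_derive r3 t (/ 2 * r3 t * e3 t) /\ is_derive e3 t (- 3 * e3 t ^ 2)) ->
     hierarchy a b (fun t => Derive r3 t / r3 t) (fun _ => 1) e3 u v p ->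
     (forall t, a < t < b -> e3 t = 2 * e3 0 / (2 + 6 * e3 0 * t)) /\
     amplitude_law a b (fun t => - (e3 t / 2)) (fun _ => - sqrt 2) u v).
Proof.
  split; [| split; [| split]].
  - intros a b r Rb eb u v p _. apply amplitude_law_of_hierarchy.
  - exact chart_K1.
  - exact chart_K2.
  - exact chart_K3.
Qed.
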